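(* The $2\times 2$ chessboard $C=[-1,0]\times[-1,0]\,\cup\,[0,1]\times[0,1]\subset\mathbb{R}^2$ is neither drawable nor closed-disk drawable.
   Context: For $A\subseteq\mathbb{R}^2$ let $N(A)=\{x\in\mathbb{R}^2: |x-a|<1 \text{ for some } a\in A\}$ and $N_{\le}(A)=\{x\in\mathbb{R}^2: |x-a|\le 1 \text{ for some } a\in A\}$. Let $\mathcal{D}_1=\{N(A_1): A_1\subseteq\mathbb{R}^2\}$ and for $n\ge 2$ let $\mathcal{D}_n=\{D\cup N(A_n): D\in\mathcal{D}_{n-1}, A_n\subseteq\mathbb{R}^2\}$ if $n$ is odd and $\mathcal{D}_n=\{D\setminus N(A_n): D\in\mathcal{D}_{n-1}, A_n\subseteq\mathbb{R}^2\}$ if $n$ is even. A set is drawable if it lies in $\mathcal{D}=\bigcup_{n\ge1}\mathcal{D}_n$. The collection $\mathcal{D}_{\le}$ of closed-disk drawable sets is defined in the same way with every $N(\cdot)$ replaced by $N_{\le}(\cdot)$. *)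

From Stdlib Require Import Reals.
Open Scope R_scope.

Definition pt := (R * R)%type.
Definition pset := pt -> Prop.

Definition dist2 (x a : pt) : R :=
  sqrt ((fst x - fst a) ^ 2 + (snd x - snd a) ^ 2).

Definition Nopen (A : pset) : pset := fun x => exists a, A a /\ dist2 x a < 1.
Definition Nclosed (A : pset) : pset := fun x => exists a, A a /\ dist2 x a <= 1.

(* Dcol Nf n S  <->  S belongs to D_n (built with neighbourhood operator Nf).
   D_0 is empty (n starts at 1); set equality is extensional. *)
Fixpoint Dcol (Nf : pset -> pset) (n : nat) (S : pset) : Prop :=
  match n with
  | O => False
  | 1%nat => exists A : pset, forall x, S x <-> Nf A x
  | S m =>
      exists (D A : pset), Dcol Nf m D /\
        forall x, S x <-> (if Nat.odd n then (D x \/ Nf A x) else (D x /\ ~ Nf A x))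
  end.

Definition drawable (S : pset) : Prop := exists n : nat, Dcol Nopen n S.
Definition closed_disk_drawable (S : pset) : Prop := exists n : nat, Dcol Nclosed n S.

Definition chessboard : pset := fun x =>
  (-1 <= fst x <= 0 /\ -1 <= snd x <= 0) \/ (0 <= fst x <= 1 /\ 0 <= snd x <= 1).

From Stdlib Require Import Reals Lra Psatz.
Open Scope R_scope.

(* A unit disk (open or closed) that meets a tiny box around the origin looks,
   at that scale, like a half-plane through the origin, so it contains points of
   the chessboard C and points of its complement arbitrarily close to 0; the 90
   degree rotation, which swaps C and its complement near 0, gives the second
   kind of point from the first.  Now let S be in D_n and agree with C on a box
   around 0.  If the last step was S = D U N(A) (resp. D \ N(A)) and N(A) met a
   smaller box, it would add a point outside C (resp. remove a point of C) from
   S, so N(A) misses that box and D agrees with C there.  Descending to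
   S = N(A) in D_1, the set N(A) contains 0, which contradicts the first
   observation. *)

Definition sqdist (x a : pt) : R := (fst x - fst a) ^ 2 + (snd x - snd a) ^ 2.

Definition in_box (r : R) (p : pt) : Prop := -r <= fst p <= r /\ -r <= snd p <= r.

Definition scale (s : R) (p : pt) : pt := (s * fst p, s * snd p).

Definition rot (p : pt) : pt := (- snd p, fst p).

Definition rot_inv (p : pt) : pt := (snd p, - fst p).

Definition diag_cell (w : pt) : Prop :=
  (1 <= fst w <= 2 /\ 1 <= snd w <= 2) \/ (-2 <= fst w <= -1 /\ -2 <= snd w <= -1).

Lemma sqdist_ge_0 x a : 0 <= sqdist x a.
Proof.
  unfold sqdist; pose proof (pow2_ge_0 (fst x - fst a)); pose proof (pow2_ge_0 (snd x - snd a)).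
  lra.
Qed.

Lemma sqdist_rot x a : sqdist (rot x) a = sqdist x (rot_inv a).
Proof. unfold sqdist, rot, rot_inv; cbn; ring. Qed.

Lemma sqdist_rot_inv x a : sqdist (rot_inv x) (rot_inv a) = sqdist x a.
Proof. unfold sqdist, rot_inv; cbn; ring. Qed.

Lemma in_box_rot_inv r p : in_box r p -> in_box r (rot_inv p).
Proof. unfold in_box, rot_inv; cbn; lra. Qed.

Lemma in_box_rot r p : in_box r p -> in_box r (rot p).
Proof. unfold in_box, rot; cbn; lra. Qed.

Lemma in_box_le r r' p : r <= r' -> in_box r p -> in_box r' p.
Proof. unfold in_box; lra. Qed.

Lemma in_box_scale_diag_cell s w : 0 < s -> diag_cell w -> in_box (2 * s) (scale s w).
Proof. unfold in_box, scale, diag_cell; cbn; intros Hs [[] | []]; split; split; nra. Qed.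

Lemma chessboard_scale_diag_cell s w : 0 < s <= 1/2 -> diag_cell w -> chessboard (scale s w).
Proof.
  unfold chessboard, scale, diag_cell; cbn; intros Hs [[] | []]; [right | left]; split; split; nra.
Qed.

Lemma not_chessboard_rot_scale_diag_cell s w :
  0 < s -> diag_cell w -> ~ chessboard (rot (scale s w)).
Proof.
  unfold chessboard, rot, scale, diag_cell; cbn.
  intros Hs [[] | []] [[[] []] | [[] []]]; nra.
Qed.

Lemma mul_le_of_bounds x y a b : -a <= x <= a -> -b <= y <= b -> x * y <= a * b.
Proof. nra. Qed.

Lemma in_box_of_sqdist_le_1 q c : in_box 1 q -> sqdist q c <= 1 -> in_box 2 c.
Proof.
  unfold in_box, sqdist; intros Hq Hqc.
  pose proof (pow2_ge_0 (fst q - fst c)). pose proof (pow2_ge_0 (snd q - snd c)).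
  split; split; nra.
Qed.

Lemma sqdist_scale_le_of_far s q c w :
  0 < s <= 1/20 -> in_box (s/32) q -> in_box 2 c ->
  fst w ^ 2 + snd w ^ 2 <= 5 -> 1/4 <= fst w * fst c + snd w * snd c ->
  sqdist (scale s w) c <= sqdist q c.
Proof.
  destruct q as [qx qy], c as [cx cy], w as [wx wy].
  unfold in_box, sqdist, scale; cbn; intros Hs [Hqx Hqy] [Hcx Hcy] Hw Hwc.
  pose proof (mul_le_of_bounds qx cx (s/32) 2 Hqx Hcx).
  pose proof (mul_le_of_bounds qy cy (s/32) 2 Hqy Hcy).
  assert (s ^ 2 * (wx ^ 2 + wy ^ 2) <= s / 4) by nra.
  assert (s / 4 <= s * (wx * cx + wy * cy)) by nra.
  nra.
Qed.

(* Either the centre c has inner product >= 1/4 with one of the six directions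
   w = +-(1,1), +-(1,2), +-(2,1), and then s w is closer to c than q is, or
   |c_x|, |c_y| < 1/4 and s (1,1) lies well inside the disk. *)
Lemma disk_reaches_diag_cell s q c :
  0 < s <= 1/20 -> in_box (s/32) q -> sqdist q c <= 1 ->
  exists w, diag_cell w /\ (sqdist (scale s w) c <= 1/2 \/ sqdist (scale s w) c <= sqdist q c).
Proof.
  intros Hs Hq Hqc.
  assert (Hc : in_box 2 c).
  { apply (in_box_of_sqdist_le_1 q); [apply (in_box_le (s/32)) |]; [lra | assumption ..]. }
  pose proof (fun w => sqdist_scale_le_of_far s q c w Hs Hq Hc) as Hfar.
  destruct c as [cx cy]; cbn in Hfar.
  destruct (Rle_lt_dec (1/4) (cx + cy)).
  { exists (1, 1); split; [left; cbn; lra | right; apply Hfar; cbn; lra]. }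
  destruct (Rle_lt_dec (1/4) (- cx - cy)).
  { exists (-1, -1); split; [right; cbn; lra | right; apply Hfar; cbn; lra]. }
  destruct (Rle_lt_dec (1/4) (cx + 2 * cy)).
  { exists (1, 2); split; [left; cbn; lra | right; apply Hfar; cbn; lra]. }
  destruct (Rle_lt_dec (1/4) (- cx - 2 * cy)).
  { exists (-1, -2); split; [right; cbn; lra | right; apply Hfar; cbn; lra]. }
  destruct (Rle_lt_dec (1/4) (2 * cx + cy)).
  { exists (2, 1); split; [left; cbn; lra | right; apply Hfar; cbn; lra]. }
  destruct (Rle_lt_dec (1/4) (- 2 * cx - cy)).
  { exists (-2, -1); split; [right; cbn; lra | right; apply Hfar; cbn; lra]. }
  exists (1, 1); split; [left; cbn; lra | left].
  unfold sqdist, scale; cbn.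
  assert (-1/2 < s * 1 - cx < 1/2) by lra.
  assert (-1/2 < s * 1 - cy < 1/2) by lra.
  nra.
Qed.

Definition straddles_origin (Nf : pset -> pset) : Prop :=
  forall (A : pset) (s : R) (q : pt), 0 < s <= 1/20 -> in_box (s/32) q -> Nf A q ->
    (exists p, in_box (2 * s) p /\ chessboard p /\ Nf A p) /\
    (exists p, in_box (2 * s) p /\ ~ chessboard p /\ Nf A p).

Section DiskUnions.

(* [within t] says that a point at squared distance t from a centre lies in
   its disk: t < 1 for open disks, t <= 1 for closed ones. *)
Variable within : R -> Prop.
Hypothesis within_le_1 : forall t, within t -> t <= 1.
Hypothesis within_half : within (1/2).
Hypothesis within_antitone : forall t t', t <= t' -> within t' -> within t.

Variable Nf : pset -> pset.
Hypothesis Nf_def : forall A x, Nf A x <-> exists a, A a /\ within (sqdist x a).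

Lemma within_scale_diag_cell s q a :
  0 < s <= 1/20 -> in_box (s/32) q -> within (sqdist q a) ->
  exists w, diag_cell w /\ within (sqdist (scale s w) a).
Proof.
  intros Hs Hq Hqa.
  destruct (disk_reaches_diag_cell s q a Hs Hq (within_le_1 _ Hqa)) as [w [Hw Hclose]].
  exists w; split; [exact Hw |].
  destruct Hclose as [Hclose | Hclose]; eapply within_antitone; eauto.
Qed.

Lemma straddles_origin_disk_union : straddles_origin Nf.
Proof.
  intros A s q Hs Hq HNq; apply Nf_def in HNq as [a [Ha Hqa]]; split.
  - destruct (within_scale_diag_cell s q a Hs Hq Hqa) as [w [Hw Hwa]].
    exists (scale s w); split; [| split].
    + apply in_box_scale_diag_cell; [lra | exact Hw].
    + apply chessboard_scale_diag_cell; [lra | exact Hw].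
    + apply Nf_def; exists a; split; assumption.
  - rewrite <- sqdist_rot_inv in Hqa.
    destruct (within_scale_diag_cell s (rot_inv q) (rot_inv a) Hs (in_box_rot_inv _ _ Hq) Hqa)
      as [w [Hw Hwa]].
    exists (rot (scale s w)); split; [| split].
    + apply in_box_rot, in_box_scale_diag_cell; [lra | exact Hw].
    + apply not_chessboard_rot_scale_diag_cell; [lra | exact Hw].
    + apply Nf_def; exists a; split; [exact Ha |].
      rewrite sqdist_rot; exact Hwa.
Qed.

End DiskUnions.

Lemma dist2_lt_1 x a : dist2 x a < 1 <-> sqdist x a < 1.
Proof.
  change (sqrt (sqdist x a) < 1 <-> sqdist x a < 1).
  rewrite <- sqrt_1 at 1; split.
  - apply sqrt_lt_0_alt.
  - intro H; apply sqrt_lt_1_alt; split; [apply sqdist_ge_0 | exact H].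
Qed.

Lemma dist2_le_1 x a : dist2 x a <= 1 <-> sqdist x a <= 1.
Proof.
  change (sqrt (sqdist x a) <= 1 <-> sqdist x a <= 1).
  rewrite <- sqrt_1 at 1; split.
  - apply sqrt_le_0; [apply sqdist_ge_0 | lra].
  - apply sqrt_le_1_alt.
Qed.

Lemma straddles_origin_Nopen : straddles_origin Nopen.
Proof.
  apply (straddles_origin_disk_union (fun t => t < 1)); [intros; lra .. |].
  intros A x; unfold Nopen; setoid_rewrite dist2_lt_1; reflexivity.
Qed.

Lemma straddles_origin_Nclosed : straddles_origin Nclosed.
Proof.
  apply (straddles_origin_disk_union (fun t => t <= 1)); [intros; lra .. |].
  intros A x; unfold Nclosed; setoid_rewrite dist2_le_1; reflexivity.
Qed.

Definition agrees_near_origin (S : pset) (r : R) : Prop :=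
  forall p, in_box r p -> (S p <-> chessboard p).

Lemma exists_scale_below r : 0 < r -> exists s, 0 < s <= 1/20 /\ 2 * s <= r.
Proof.
  intro Hr; exists (Rmin (r/2) (1/20)).
  pose proof (Rmin_l (r/2) (1/20)); pose proof (Rmin_r (r/2) (1/20)).
  pose proof (Rmin_glb_lt (r/2) (1/20) 0 ltac:(lra) ltac:(lra)).
  lra.
Qed.

Section Peeling.

Variable Nf : pset -> pset.
Hypothesis Nf_straddles : straddles_origin Nf.

Variables (S D A : pset) (r s : R).
Hypothesis Hs : 0 < s <= 1/20.
Hypothesis Hsr : 2 * s <= r.
Hypothesis HS_agrees : agrees_near_origin S r.

Let agrees_in_small_box p : in_box (2 * s) p -> (S p <-> chessboard p).
Proof. intro Hp; apply HS_agrees, (in_box_le (2 * s)); assumption. Qed.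

Let agrees_in_tiny_box p : in_box (s/32) p -> (S p <-> chessboard p).
Proof. intro Hp; apply agrees_in_small_box, (in_box_le (s/32)); [lra | exact Hp]. Qed.

Lemma agrees_near_origin_of_union :
  (forall p, S p <-> D p \/ Nf A p) -> agrees_near_origin D (s/32).
Proof.
  intros HS p Hp.
  rewrite <- (agrees_in_tiny_box p Hp), HS; split; [tauto |].
  intros [HDp | HNp]; [exact HDp |].
  destruct (Nf_straddles A s p Hs Hp HNp) as [_ [p' [Hp' [Hp'C HNp']]]].
  exfalso; apply Hp'C, agrees_in_small_box, HS; tauto.
Qed.

Lemma agrees_near_origin_of_diff :
  (forall p, S p <-> D p /\ ~ Nf A p) -> agrees_near_origin D (s/32).
Proof.
  intros HS p Hp.
  rewrite <- (agrees_in_tiny_box p Hp), HS; split; [| tauto].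
  intro HDp; split; [exact HDp |]; intro HNp.
  destruct (Nf_straddles A s p Hs Hp HNp) as [[p' [Hp' [Hp'C HNp']]] _].
  apply agrees_in_small_box, HS in Hp'C; tauto.
Qed.

End Peeling.

Lemma Dcol_disagrees_near_origin Nf :
  straddles_origin Nf -> forall n S r, 0 < r -> Dcol Nf n S -> ~ agrees_near_origin S r.
Proof.
  intros HNf n; induction n as [| n IH]; intros S r Hr HD HSr; [exact HD |].
  destruct (exists_scale_below r Hr) as [s [Hs Hsr]].
  destruct n as [| m].
  - destruct HD as [A HA].
    (* D_1 = N(A) is the union step with D empty. *)
    assert (H0 : agrees_near_origin (fun _ => False) (s/32)).
    { apply (agrees_near_origin_of_union Nf HNf S _ A r s); auto.
      intro p; rewrite HA; tauto. }
    apply (H0 (0, 0)); [unfold in_box; cbn; lra | left; cbn; lra].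
  - destruct HD as [D [A [HD HS]]].
    apply (IH D (s/32)); [lra | exact HD |].
    destruct (Nat.odd _).
    + exact (agrees_near_origin_of_union Nf HNf S D A r s Hs Hsr HSr HS).
    + exact (agrees_near_origin_of_diff Nf HNf S D A r s Hs Hsr HSr HS).
Qed.

Lemma chessboard_not_Dcol Nf : straddles_origin Nf -> forall n, ~ Dcol Nf n chessboard.
Proof.
  intros HNf n Hn.
  apply (Dcol_disagrees_near_origin Nf HNf n chessboard 1); [lra | exact Hn |].
  intros p _; reflexivity.
Qed.

Theorem theorem1p1 : ~ drawable chessboard /\ ~ closed_disk_drawable chessboard.
Proof.
  split; intros [n Hn].
  - exact (chessboard_not_Dcol Nopen straddles_origin_Nopen n Hn).
  - exact (chessboard_not_Dcol Nclosed straddles_origin_Nclosed n Hn).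
Qed.
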